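(* Let $K \ge 2$, $k \in \{1,\dots,K-1\}$, $\mathbf{x}_0 = \mathbf{e}_k \in \{0,1\}^K$, and let $\mathbf{e}_K$ be the $K$-th standard basis vector. Let $\boldsymbol{\epsilon} \sim \mathcal{N}(\mathbf{0},\mathbf{I}_K)$, $Y = \max_{j\neq k}\epsilon_j - \epsilon_k$, and $F_Y$ the cumulative distribution function of $Y$. Let $(\gamma_t)_{t\in[0,1]}$ be a schedule with $\gamma_t \in (0,1)$, and let $(\tilde{\alpha}_t,\tilde{\sigma}_t)_{t\in[0,1]}$ be real coefficients with $\tilde{\sigma}_t>0$, $\tilde{\alpha}_t^2+\tilde{\sigma}_t^2=1$, and $F_Y(\tilde{\alpha}_t/\tilde{\sigma}_t) = \gamma_t$ for all $t$. Define $\mathbf{w}_t = \tilde{\alpha}_t\mathbf{x}_0 + \tilde{\sigma}_t\boldsymbol{\epsilon}$ and $\mathbf{z}_t = \mathbf{x}_0$ if $\mathbf{w}_t^{(k)} > \max_{j\neq k}\mathbf{w}_t^{(j)}$, $\mathbf{z}_t = \mathbf{e}_K$ otherwise. Let $u = F_Y(Y)$. Then $u$ is uniformly distributed on $[0,1]$, and for every $t\in[0,1]$, $$\mathbf{z}_t = \begin{cases}\mathbf{x}_0 & \text{if } \gamma_t > u,\\ \mathbf{e}_K & \text{otherwise.}\end{cases}$$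
   Context: This is the masked-diffusion setting in which each token's discrete state is the projection of a variance-preserving Gaussian latent along a deterministic path with a single fixed noise vector $\boldsymbol{\epsilon}$; $\gamma_t$ is the probability that the token is unmasked at time $t$. *)

From HB Require Import structures.
From mathcomp Require Import all_boot all_order all_algebra.
From mathcomp Require Import all_classical all_reals all_analysis.
Set Implicit Arguments. Unset Strict Implicit. Unset Printing Implicit Defensive.
Import Order.TTheory GRing.Theory Num.Theory.
Local Open Scope classical_set_scope.
Local Open Scope ring_scope.

(* Mutual independence of a finite family of real random variables:
   the product rule for every choice of Borel sets (sets B i = setT
   recover every sub-family). *)
Definition mutually_independent (d : measure_display) (T : measurableType d)
  (R : realType) (P : probability T R) (K : nat) (X : 'I_K -> T -> R) : Prop :=
  forall B : 'I_K -> set R, (forall i, measurable (B i)) ->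
    P (\bigcap_(i in [set: 'I_K]) (X i @^-1` B i)) =
    (\prod_(i < K) P (X i @^-1` B i))%E.

(* Standard basis vector e_i of R^K, indexed from 0: e_ i has a 1 in
   coordinate i (as a natural number) and 0 elsewhere. *)
Definition ebasis (R : realType) (K : nat) (i : nat) : 'rV[R]_K :=
  \row_(j < K) ((j : nat) == i)%:R.

(* max_{j <> k} v^(j), computed in the extended reals (= -oo on an empty
   index set) and brought back to R with fine. *)
Definition max_except (R : realType) (K : nat) (k : 'I_K) (v : 'rV[R]_K) : R :=
  fine (\big[Order.max/-oo%E]_(j < K | j != k) ((v 0 j)%:E)).

Definition cdf_of (d : measure_display) (T : measurableType d)
  (R : realType) (P : probability T R) (X : T -> R) (y : R) : R :=
  fine (P [set w | X w <= y]).

From HB Require Import structures.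
From mathcomp Require Import all_boot all_order all_algebra.
From mathcomp Require Import all_classical all_reals all_analysis.
From mathcomp Require Import measurable_realfun.
From mathcomp Require Import ring lra.
Import Order.TTheory GRing.Theory Num.Theory.
Import numFieldNormedType.Exports.
Set Implicit Arguments. Unset Strict Implicit. Unset Printing Implicit Defensive.
Local Open Scope classical_set_scope.
Local Open Scope ring_scope.

(* Y = max_{j <> k} eps_j - eps_k has a continuous and strictly increasing
   distribution function F: it has no atoms because each difference
   eps_j - eps_k of independent Gaussians has none, and it charges every
   interval because independent Gaussians charge every box.  Hence u = F(Y) is
   uniform on [0, 1] (probability integral transform).  Moreover the k-th
   coordinate of w_t = alpha x0 + sigma eps is the strict maximum exactly when
   Y < alpha / sigma, which by strict monotonicity of F is u < F(alpha / sigma)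
   = gamma_t. *)

Section standard_normal.
Variable R : realType.

Lemma normal_peak1_le1 : normal_peak (1 : R) <= 1.
Proof.
rewrite /normal_peak invf_le1 ?sqrtr_gt0; last first.
  by rewrite expr1n mul1r mulrn_wgt0 // pi_gt0.
rewrite expr1n mul1r -{1}sqrtr1 ler_sqrt; last by rewrite mulrn_wge0 // pi_ge0.
by have := @pi_ge2 R; rewrite mulr2n; lra.
Qed.

Lemma normal_prob01_itv_le (a b : R) : a <= b ->
  (normal_prob 0 1 `[a, b[ <= (b - a)%:E)%E.
Proof.
move=> ab; rewrite /normal_prob.
apply: (@le_trans _ _ (\int[lebesgue_measure]_(x in `[a, b[) (cst 1) x)%E).
  apply: ge0_le_integral => //.
  - by move=> x _; rewrite lee_fin normal_pdf_ge0.
  - by apply/measurable_EFinP/measurable_funTS; exact: measurable_normal_pdf.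
  move=> x _; rewrite lee_fin.
  exact: le_trans (normal_pdf_ub _ _ (oner_neq0 R)) normal_peak1_le1.
rewrite integral_cst // mul1e.
have := @lebesgue_measure_itv R `[a, b[ => /= ->.
by case: ifPn => _ //; rewrite lee_fin subr_ge0.
Qed.

Lemma normal_prob01_itv_gt0 (a b : R) : a < b -> (0 < normal_prob 0 1 `]a, b[)%E.
Proof.
move=> ab; rewrite /normal_prob.
pose t := `|a| + `|b|.
pose c := normal_pdf 0 1 t.
have c_gt0 : 0 < c.
  by rewrite /c normal_pdfE ?oner_neq0 // mulr_gt0 ?expR_gt0 ?normal_peak_gt0 ?oner_neq0.
apply: (@lt_le_trans _ _ (\int[lebesgue_measure]_(x in `]a, b[) (cst c%:E) x)%E).
  rewrite integral_cst //.
have := @lebesgue_measure_itv R `]a, b[ => /= ->; rewrite lte_fin ab -EFinB -EFinM lte_fin.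
  by rewrite mulr_gt0 // subr_gt0.
apply: ge0_le_integral => //.
- by move=> x _; rewrite lee_fin ltW.
- by apply/measurable_EFinP/measurable_funTS; exact: measurable_normal_pdf.
move=> x; rewrite /= in_itv /= => /andP[ax xb].
rewrite lee_fin /c !normal_pdfE ?oner_neq0 //= ler_pM2l ?normal_peak_gt0 ?oner_neq0 //.
rewrite /normal_fun ler_expR !subr0 expr1n !mulNr lerN2 ler_pM2r //.
have x_le_t : `|x| <= t.
  have := ler_norm a; have := ler_norm (- a); have := ler_norm b.
  have := normr_ge0 a; have := normr_ge0 b; rewrite normrN /t.
  by case: (lerP 0 x) => x0; [rewrite (ger0_norm x0) | rewrite (ltr0_norm x0)]; lra.
by rewrite -(real_normK (num_real x)); have := normr_ge0 x; nra.
Qed.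

End standard_normal.

Section grid.
Variable R : realType.
Implicit Types (dl c x y : R) (n : nat).

(* The cells [c + z dl, c + (z + 1) dl[ of a grid of mesh dl, indexed by nat
   through the countable type int (undecodable indices give empty cells). *)
Definition grid_cell dl c n : set R :=
  if @pickle_inv int n is Some z then [set x | Num.floor ((x - c) / dl) = z]
  else set0.

Lemma floor_level_setE dl c (z : int) : 0 < dl ->
  [set x | Num.floor ((x - c) / dl) = z] =
  `[c + z%:~R * dl, c + z%:~R * dl + dl[%classic.
Proof.
move=> dl0; apply/seteqP; split => x /=; rewrite in_itv /=.
  move=> <-; have := floor_itv ((x - c) / dl); rewrite intrD.
  set q := (x - c) / dl.
  have -> : x = c + q * dl by rewrite /q divfK ?gt_eqF //; ring.
  by move=> /andP[lo hi]; apply/andP; split; nra.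
move=> /andP[lo hi]; apply: floor_def; rewrite intrD.
by rewrite ler_pdivlMr // ltr_pdivrMr //; apply/andP; split; lra.
Qed.

Lemma grid_cellP dl c n : 0 < dl ->
  grid_cell dl c n = set0 \/ exists a, grid_cell dl c n = `[a, a + dl[%classic.
Proof.
rewrite /grid_cell => dl0; case: pickle_inv => [z|]; last by left.
by right; exists (c + z%:~R * dl); exact: floor_level_setE.
Qed.

Lemma grid_cell_trivIset dl c : trivIset setT (grid_cell dl c).
Proof.
move=> n m _ _ [x []]; rewrite /grid_cell.
have := @pickle_invK int n; have := @pickle_invK int m.
case: (pickle_inv n) => [z|] //; case: (pickle_inv m) => [z'|] //= <- <- xn xm.
by rewrite -xn -xm.
Qed.

Lemma grid_cell_cover dl c x : exists n, grid_cell dl c n x.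
Proof.
by exists (pickle (Num.floor ((x - c) / dl))); rewrite /grid_cell pickleK_inv.
Qed.

Lemma grid_cellD dl c y n x : grid_cell dl c n x -> grid_cell dl (c + y) n (x + y).
Proof.
by rewrite /grid_cell; case: pickle_inv => // z /=; rewrite opprD addrACA subrr addr0.
Qed.

End grid.

Section independent_difference.
Context d (T : measurableType d) (R : realType) (P : probability T R).
Variables (X Z : {RV P >-> R}) (C : R).
Hypothesis C_gt0 : 0 < C.
Hypothesis XZ_indep : forall A B, measurable A -> measurable B ->
  P (X @^-1` A `&` Z @^-1` B) = (P (X @^-1` A) * P (Z @^-1` B))%E.
Hypothesis Z_itv_le : forall a b, a <= b ->
  (P (Z @^-1` `[a, b[) <= (C * (b - a))%:E)%E.

(* Cover {Z - X = y} by the events {X in I_n, Z in I_n + y} for a grid (I_n)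
   of mesh dl: their total mass is at most C dl * sum_n P(X in I_n) <= C dl. *)
Lemma independent_difference_negligible y :
  P.-negligible [set w | Z w - X w = y].
have mD : measurable [set w | Z w - X w = y].
  rewrite -[X in measurable X]setTI -[[set _ | _]]/((fun w => Z w - X w) @^-1` [set y]).
  by apply: measurable_funB => //; exact: measurable_set1.
exists [set w | Z w - X w = y]; split => //.
apply/eqP; rewrite eq_le measure_ge0 andbT; apply/lee_addgt0Pr => e e0.
rewrite add0e; have dl0 : 0 < e / C by rewrite divr_gt0.
pose cell := grid_cell (e / C).
have mcell c n : measurable (cell c n).
  by rewrite /cell; case: (grid_cellP c n dl0) => [->|[a ->]].
have Zcell c n : (P (Z @^-1` cell c n) <= (C * (e / C))%:E)%E.
  rewrite /cell; case: (grid_cellP c n dl0) => [->|[a ->]].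
    by rewrite preimage_set0 measure0 lee_fin mulr_ge0 // ltW.
  apply: le_trans (Z_itv_le _) _; first by rewrite lerDl ltW.
  by rewrite addrAC subrr add0r.
pose F n := X @^-1` cell 0 n `&` Z @^-1` cell y n.
have mF n : measurable (F n) by apply: measurableI; exact: measurable_funPTI.
have DF : [set w | Z w - X w = y] `<=` \bigcup_n F n.
  move=> w /= Dw; have [n Xn] := grid_cell_cover (e / C) 0 (X w).
  exists n => //; split => //=.
  have -> : Z w = X w + y by rewrite -Dw addrC subrK.
  by have := grid_cellD y Xn; rewrite add0r.
apply: (le_trans (measure_sigma_subadditive P mF mD DF)).
apply: (@le_trans _ _ (\sum_(n <oo) ((C * (e / C))%:E * P (X @^-1` cell 0%R n)))%E).
  apply: lee_nneseries => [n _ _|n _]; first exact: measure_ge0.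
  rewrite /F /= XZ_indep // muleC.
  by apply: lee_pmul => //; exact: measure_ge0.
rewrite nneseriesZl; last by move=> n _; exact: measure_ge0.
have -> : C * (e / C) = e by rewrite mulrC divfK ?gt_eqF.
rewrite -(measure_semi_bigcup (distribution P X)) //; last 2 first.
- exact: grid_cell_trivIset.
- exact: bigcup_measurable.
rewrite -[leRHS]mule1; apply: lee_pmul => //; first by rewrite lee_fin ltW.
by apply: probability_le1; exact: bigcup_measurable.
Qed.

End independent_difference.

Section max_except.
Variables (R : realType) (K : nat) (k : 'I_K).
Implicit Types v : 'rV[R]_K.

Lemma eq_max_except v v' : (forall j, j != k -> v 0 j = v' 0 j) ->
  max_except k v = max_except k v'.
Proof. by move=> vv'; congr fine; apply: eq_bigr => j /vv' ->. Qed.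

Variables (i0 : 'I_K) (i0k : i0 != k).

Let bigmax_attained v : exists2 j, j != k &
  \big[Order.max/-oo%E]_(i < K | i != k) (v 0 i)%:E = (v 0 j)%:E.
Proof.
have [j jk ->] := eq_bigmax i0 (fun i => i != k) (fun i => (v 0 i)%:E) i0k (fun i _ => leNye _).
by exists j.
Qed.

Lemma max_except_attained v : exists2 j, j != k & max_except k v = v 0 j.
Proof. by have [j jk e] := bigmax_attained v; exists j; rewrite // /max_except e. Qed.

Lemma max_except_ub v j : j != k -> v 0 j <= max_except k v.
Proof.
move=> jk; have [i _ e] := bigmax_attained v.
by rewrite /max_except e /= -lee_fin -e; exact: le_bigmax_cond.
Qed.

Lemma max_exceptZ s v : 0 < s -> max_except k (s *: v) = s * max_except k v.
Proof.
move=> s0; apply/le_anti/andP; split.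
- have [j jk ->] := max_except_attained (s *: v).
  by rewrite mxE ler_pM2l //; exact: max_except_ub.
- have [i ik ->] := max_except_attained v.
  by have := max_except_ub (s *: v) ik; rewrite mxE.
Qed.

Lemma max_except_ebasis_ltE a s v : 0 < s ->
  (max_except k (a *: ebasis R K k + s *: v) < (a *: ebasis R K k + s *: v) 0 k)
  = (max_except k v - v 0 k < a / s).
Proof.
move=> s0.
have -> : max_except k (a *: ebasis R K k + s *: v) = s * max_except k v.
  rewrite -max_exceptZ //; apply: eq_max_except => j jk.
  by rewrite !mxE (negbTE (jk : (j : nat) != k)) mulr0 add0r.
rewrite !mxE eqxx mulr1 ltr_pdivlMr //.
by apply/idP/idP => h; lra.
Qed.

End max_except.

Lemma measurable_max_except d (T : measurableType d) (R : realType) (K : nat)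
  (k : 'I_K) (X : 'I_K -> T -> R) : (forall j, measurable_fun setT (X j)) ->
  measurable_fun setT (fun w => max_except k (\row_j X j w)).
Proof.
move=> mX; apply: measurableT_comp => //=.
elim: (index_enum _) => [|j s IH].
  by under eq_fun do rewrite big_nil; exact: measurable_cst.
under eq_fun do rewrite big_cons.
case: (j != k) => //; apply: measurable_maxe => //.
by under eq_fun do rewrite mxE; exact/measurable_EFinP.
Qed.

Definition cdfr d (T : measurableType d) (R : realType) (P : probability T R)
  (X : {RV P >-> R}) (y : R) : R := fine (cdf X y).

Section real_cdf.
Context d (T : measurableType d) (R : realType) (P : probability T R).
Variable X : {RV P >-> R}.

Lemma cdfrE y : (cdfr X y)%:E = cdf X y.
Proof. by rewrite fineK // fin_num_measure. Qed.

Lemma cdf_ofE y : cdf_of P X y = cdfr X y.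
Proof. by rewrite /cdf_of -preimage_itvNyc. Qed.

Lemma cdfr_ge0 y : 0 <= cdfr X y.
Proof. by rewrite fine_ge0. Qed.

Lemma cdfr_le1 y : cdfr X y <= 1.
Proof. by rewrite -lee_fin cdfrE cdf_le1. Qed.

Lemma cdfr_right_continuous : right_continuous (cdfr X).
Proof. by move=> a; apply: fine_cvg; rewrite cdfrE; exact: cdf_right_continuous. Qed.

Lemma cvg_cdfrNy0 : cdfr X x @[x --> -oo%R] --> (0 : R).
Proof. exact/fine_cvg/cvg_cdfNy0. Qed.

Lemma cvg_cdfry1 : cdfr X x @[x --> +oo%R] --> (1 : R).
Proof. exact/fine_cvg/cvg_cdfy1. Qed.

End real_cdf.

Section uniform01.
Variable R : realType.

Definition uniform01_survival (x : R) : R :=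
  if x <= 0 then 1 else if x < 1 then 1 - x else 0.

Lemma uniform01_itv_ge x :
  uniform_prob (@ltr01 R) `[x, +oo[ = (uniform01_survival x)%:E.
Proof.
rewrite /uniform01_survival /uniform_prob; case: (lerP x 0) => x0.
  apply: (integral_uniform_pdf1 ltr01) => y /=; rewrite !in_itv /= andbT => /andP[+ _].
  exact: le_trans.
rewrite integral_uniform_pdf; case: (lerP x 1) => x1; last first.
  rewrite (_ : _ `&` _ = set0) ?integral_set0 ?ltNge ?(ltW x1) //.
  apply/seteqP; split => // y /=; rewrite !in_itv /= andbT => -[xy /andP[_ y1]].
  by have := lt_le_trans x1 (le_trans xy y1); rewrite ltxx.
have -> : `[x, +oo[%classic `&` `[0, 1]%classic = `[x, 1]%classic :> set R.
  apply/seteqP; split => y /=; rewrite !in_itv /= ?andbT.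
    by move=> [-> /andP[_ ->]].
  by move=> /andP[xy ->]; rewrite xy (le_trans (ltW x0) xy).
rewrite (eq_integral (fun _ => 1%E)); last first.
  move=> y; rewrite inE /= in_itv /= => /andP[xy y1].
  by rewrite /uniform_pdf (le_trans (ltW x0) xy) y1 subr0 invr1.
rewrite integral_cst // mul1e.
have := @lebesgue_measure_itv R `[x, 1] => /= ->; rewrite lte_fin -EFinB.
by case: ltgtP x1 => // ->; rewrite subrr.
Qed.

End uniform01.

Section atomless_cdf.
Context d (T : measurableType d) (R : realType) (P : probability T R).
Variable X : {RV P >-> R}.
Hypothesis X_atomless : forall y, P (X @^-1` [set y]) = 0%E.
Hypothesis X_itv_gt0 : forall a b, a < b -> (0 < P (X @^-1` `]a, b]))%E.

Lemma cdfr_homo_lt : {homo cdfr X : a b / a < b}.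
Proof.
move=> a b ab; rewrite -lte_fin !cdfrE /cdf /distribution /pushforward.
rewrite (@itv_bndbnd_setU _ _ -oo%O (BRight a) (BRight b)) ?bnd_simp ?ltW // preimage_setU.
rewrite measureU //= ?lteDl ?fin_num_measure ?X_itv_gt0 //; try by apply: measurable_funPTI.
rewrite -preimage_setI; apply/seteqP; split => // w /=; rewrite !in_itv /=.
by move=> [wa /andP[aw _]]; move: (le_lt_trans wa aw); rewrite ltxx.
Qed.

Lemma cdfr_leE : {mono cdfr X : a b / a <= b}.
Proof. exact/le_mono/cdfr_homo_lt. Qed.

Lemma cdfr_ltE : {mono cdfr X : a b / a < b}.
Proof. exact/leW_mono/cdfr_leE. Qed.

Lemma cdfr_gt0 y : 0 < cdfr X y.
Proof. by apply: le_lt_trans (cdfr_ge0 X (y - 1)) _; rewrite cdfr_ltE gtrBl. Qed.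

Lemma cdfr_lt1 y : cdfr X y < 1.
Proof. by apply: lt_le_trans (cdfr_le1 X (y + 1)); rewrite cdfr_ltE ltrDl. Qed.

Lemma prob_ge_cdfr c : P (X @^-1` `[c, +oo[) = (1 - cdfr X c)%:E.
Proof.
have -> : X @^-1` `[c, +oo[ = ~` (X @^-1` `]-oo, c[) by rewrite preimage_setC setCitvl.
rewrite probability_setC; last by apply: measurable_funPTI.
rewrite EFinB cdfrE /cdf /distribution /pushforward -(@setUitv1 _ _ -oo%O c true) //.
rewrite preimage_setU measureU //; try by apply: measurable_funPTI.
  by have := X_atomless c => /= ->; rewrite adde0.
rewrite -preimage_setI; apply/seteqP; split => // w /=; rewrite !in_itv /=.
by move=> [+ wc]; rewrite wc ltxx.
Qed.

Let cdfr_oppE z : cdfr X z = 1 - cdfr (P := P) (\- X) (- z).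
Proof.
have : (cdfr (P := P) (\- X) (- z))%:E = (1 - cdfr X z)%:E.
  rewrite cdfrE -prob_ge_cdfr; congr (P _); apply/seteqP.
  by split => w /=; rewrite !in_itv /= andbT lerN2.
by case=> ->; rewrite opprB addrC subrK.
Qed.

Lemma cdfr_continuous : continuous (cdfr X).
Proof.
move=> y; apply/left_right_continuousP; split; last exact: cdfr_right_continuous.
(* Since X has no atoms, F(z) = 1 - F_{-X}(-z), so left continuity of F is
   right continuity of F_{-X}. *)
apply/cvg_at_leftNP.
have -> : cdfr X \o -%R = fun z => 1 - cdfr (P := P) (\- X) z.
  by apply/funext => z /=; rewrite cdfr_oppE opprK.
rewrite [Z in _ --> Z]cdfr_oppE; apply: (@cvgB _ R^o); first exact: cvg_cst.
exact: cdfr_right_continuous.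
Qed.

Lemma cdfr_surj s : 0 < s < 1 -> exists c, cdfr X c = s.
Proof.
move=> /andP[s0 s1].
have [y1 y1s] : exists y, cdfr X y < s.
  have [M [_ hM]] := cvgr_lt _ (cvg_cdfrNy0 X) _ s0.
  by exists (M - 1); apply: hM; rewrite gtrBl.
have [y2 sy2] : exists y, s < cdfr X y.
  have [M [_ hM]] := cvgr_gt _ (cvg_cdfry1 X) _ s1.
  by exists (M + 1); apply: hM; rewrite ltrDl.
have y12 : y1 <= y2 by rewrite -cdfr_leE ltW // (lt_trans y1s sy2).
have s_mid : Num.min (cdfr X y1) (cdfr X y2) <= s <= Num.max (cdfr X y1) (cdfr X y2).
  by rewrite min_l ?max_r ?cdfr_leE // (ltW y1s) (ltW sy2).
have [c _ cs] := IVT y12 (continuous_subspaceT cdfr_continuous) s_mid.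
by exists c.
Qed.

(* [uniform_prob] is a measure on [measurableTypeR R], hence this codomain. *)
Let measurable_cdfr_comp :
  measurable_fun (U := measurableTypeR R) setT (cdfr X \o X).
Proof.
have : measurable_fun setT (cdfr X \o X).
  apply: measurableT_comp => //; apply: nondecreasing_measurable => // a b.
  by rewrite cdfr_leE.
exact.
Qed.

Let cdfr_comp : {mfun T >-> measurableTypeR R} :=
  @mfun_Sub _ _ T (measurableTypeR R) _ (mem_set measurable_cdfr_comp).

Lemma prob_cdfr_comp_ge x :
  P ((cdfr X \o X) @^-1` `[x, +oo[) = (uniform01_survival x)%:E.
Proof.
rewrite /uniform01_survival; case: (lerP x 0) => x0.
  rewrite (_ : _ @^-1` _ = setT) ?probability_setT //.
  apply/seteqP; split => // w _ /=; rewrite in_itv /= andbT.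
  exact: le_trans x0 (ltW (cdfr_gt0 _)).
case: (ltP x 1) => x1; last first.
  rewrite (_ : _ @^-1` _ = set0) ?measure0 //.
  apply/seteqP; split => // w /=; rewrite in_itv /= andbT => xF.
  by have := lt_le_trans (le_lt_trans xF (cdfr_lt1 _)) x1; rewrite ltxx.
have [c <-] : exists c, cdfr X c = x by apply: cdfr_surj; rewrite x0 x1.
rewrite -prob_ge_cdfr; congr (P _); apply/seteqP.
by split => w /=; rewrite !in_itv /= !andbT cdfr_leE.
Qed.

Lemma cdfr_comp_uniform A : measurable A ->
  P ((cdfr X \o X) @^-1` A) = uniform_prob (@ltr01 R) A.
Proof.
move=> mA; have := @measure_unique _ R (measurableTypeR R) (@RGenCInfty.G R)
  (fun n : nat => `[- n%:R, +oo[%classic) (@RGenCInfty.measurableE R) _ _ _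
  (distribution P cdfr_comp) (uniform_prob (@ltr01 R)) _ _ A mA.
apply.
- move=> _ _ [x ->] [y ->]; exists (Num.max x y).
  apply/seteqP; split => z /=; rewrite !in_itv /= !andbT ge_max; first by case=> -> ->.
  by move/andP.
- by move=> n; exists (- n%:R).
- apply/seteqP; split => // z _; exists (Num.bound `|z|) => //=.
  rewrite in_itv /= andbT lerNl; apply: le_trans (ltW (archi_boundP (normr_ge0 z))).
  by rewrite -normrN ler_norm.
- by move=> _ [x ->]; exact: etrans (prob_cdfr_comp_ge x) (esym (uniform01_itv_ge x)).
- by move=> n; rewrite (le_lt_trans (probability_le1 _ _)) ?ltry.
Qed.

End atomless_cdf.

Section max_gap.
Context d (T : measurableType d) (R : realType) (P : probability T R) (K : nat).
Variables (X : 'I_K -> {RV P >-> R}) (k : 'I_K).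

Definition max_gap (w : T) : R := max_except k (\row_j X j w) - X k w.

Lemma measurable_max_gap : measurable_fun setT max_gap.
Proof. by apply: measurable_funB => //; exact: measurable_max_except. Qed.

HB.instance Definition _ :=
  isMeasurableFun.Build _ _ _ _ max_gap measurable_max_gap.

Hypothesis X_indep : mutually_independent P (fun j => X j : T -> R).
Variables (i0 : 'I_K) (i0k : i0 != k).

Lemma independent_pair i j A B : i != j -> measurable A -> measurable B ->
  P (X i @^-1` A `&` X j @^-1` B) = (P (X i @^-1` A) * P (X j @^-1` B))%E.
Proof.
move=> ij mA mB.
pose Bs l := if l == i then A else if l == j then B else setT.
have mBs l : measurable (Bs l) by rewrite /Bs; case: ifP => _ //; case: ifP.
have := X_indep mBs.
rewrite (bigD1 i) //= (bigD1 j) 1?eq_sym //= big1 => [|l /andP[li lj]]; last first.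
  by rewrite /Bs (negbTE li) (negbTE lj) preimage_setT probability_setT.
rewrite mule1 /Bs eqxx eq_sym (negbTE ij) eqxx => <-.
congr (P _); apply/seteqP; split => [w [Aw Bw] l _ | w Bw]; rewrite /Bs.
- by case: ifP => [/eqP -> //|_]; case: ifP => [/eqP -> //|].
- split; first by have := Bw i I; rewrite /Bs eqxx.
  by have := Bw j I; rewrite /Bs eq_sym (negbTE ij) eqxx.
Qed.

Section bounded_density.
Variable C : R.
Hypothesis C_gt0 : 0 < C.
Hypothesis X_itv_le : forall j a b, a <= b ->
  (P (X j @^-1` `[a, b[) <= (C * (b - a))%:E)%E.

Lemma max_gap_atomless y : P (max_gap @^-1` [set y]) = 0%E.
Proof.
pose D j := [set w | X j w - X k w = y].
have nD : P.-negligible (\big[setU/set0]_(j | j != k) D j).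
  apply: (big_ind (fun A => P.-negligible A)) => [|A B|j jk].
  - exact: negligible_set0.
  - exact: negligibleU.
  apply: (independent_difference_negligible C_gt0 _ (X_itv_le j)).
  by move=> A B mA mB; apply: independent_pair; rewrite // eq_sym.
apply/negligibleP; first by apply: measurable_funPTI.
apply: negligibleS nD => w /= gw; have [j jk Mj] := max_except_attained i0k (\row_l X l w).
by rewrite (bigD1 j) //=; left; rewrite /D /= -gw /max_gap Mj mxE.
Qed.

End bounded_density.

Hypothesis X_itv_gt0 : forall j a b, a < b -> (0 < P (X j @^-1` `]a, b[))%E.

Lemma max_gap_itv_gt0 a b : a < b -> (0 < P (max_gap @^-1` `]a, b]))%E.
Proof.
(* On the box where X k lies in ]-m, -m + h[ and the other X j in ]0, h[,
   max_gap lies in ]m - h, m + h[, a subset of ]a, b]. *)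
move=> ab; pose m := (a + b) / 2; pose h := (b - a) / 4.
pose B i : set R := if i == k then `](- m), (- m + h)[%classic else `]0, h[%classic.
have mB i : measurable (B i) by rewrite /B; case: ifP.
apply: (@lt_le_trans _ _ (P (\bigcap_(i in [set: 'I_K]) (X i @^-1` B i)))).
  rewrite X_indep //; apply: (big_ind (fun x => 0 < x)%E) => //.
    by move=> x y; exact: mule_gt0.
  by move=> i _; rewrite /B; case: ifP => _; apply: X_itv_gt0; rewrite /h /m; lra.
apply: le_measure; rewrite ?inE; last 2 first.
- by apply: measurable_funPTI.
- move=> w /= Bw; rewrite in_itv /= /max_gap.
  have [j jk ->] := max_except_attained i0k (\row_l X l w).
  have := Bw k I; have := Bw j I; rewrite /B eqxx (negbTE jk) mxE /= !in_itv /=.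
  move=> /andP[lj uj] /andP[lk uk]; rewrite /m /h in lj uj lk uk *.
  by apply/andP; split; lra.
by apply: fin_bigcap_measurable => // i _; apply: measurable_funPTI.
Qed.

End max_gap.

Theorem theorem3p3 (R : realType) (d : measure_display) (T : measurableType d)
  (P : probability T R) (K : nat) (hK : (2 <= K)%N) (k : 'I_K)
  (hk : (k.+1 < K)%N)
  (eps : 'I_K -> {RV P >-> R})
  (heps_law : forall j, distribution P (eps j) = normal_prob 0 1)
  (heps_ind : mutually_independent P (fun j => eps j : T -> R))
  (gamma alpha sigma : R -> R)
  (hgamma : forall t : R, 0 <= t <= 1 -> 0 < gamma t < 1)
  (hsigma : forall t : R, 0 <= t <= 1 -> 0 < sigma t)
  (hnorm : forall t : R, 0 <= t <= 1 -> alpha t ^+ 2 + sigma t ^+ 2 = 1)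
  (Y : T -> R)
  (hY : forall w, Y w = max_except k (\row_j eps j w) - eps k w)
  (hF : forall t : R, 0 <= t <= 1 -> cdf_of P Y (alpha t / sigma t) = gamma t)
  (x0 eK : 'rV[R]_K) (hx0 : x0 = ebasis R K k) (heK : eK = ebasis R K K.-1)
  (wt zt : R -> T -> 'rV[R]_K)
  (hw : forall (t : R) (w : T), wt t w = alpha t *: x0 + sigma t *: \row_j eps j w)
  (hz : forall (t : R) (w : T), zt t w =
          if wt t w 0 k > max_except k (wt t w) then x0 else eK)
  (u : T -> R) (hu : forall w, u w = cdf_of P Y (Y w)) :
  (forall A : set R, measurable A ->
     P (u @^-1` A) = uniform_prob (@ltr01 R) A) /\
  (forall t : R, 0 <= t <= 1 -> forall w,
     zt t w = if gamma t > u w then x0 else eK).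
Proof.
have k1k : Ordinal hk != k by rewrite -val_eqE /= gtn_eqF.
have eps_itv_le j a b : a <= b -> (P (eps j @^-1` `[a, b[) <= (1 * (b - a))%:E)%E.
  by rewrite mul1r -[P _]/(distribution P (eps j) _) heps_law; exact: normal_prob01_itv_le.
have eps_itv_gt0 j a b : a < b -> (0 < P (eps j @^-1` `]a, b[))%E.
  by rewrite -[P _]/(distribution P (eps j) _) heps_law; exact: normal_prob01_itv_gt0.
pose G : {RV P >-> R} := max_gap eps k.
have YE : Y = G by apply/funext => w; rewrite hY.
have uE : u = cdfr G \o G by apply/funext => w; rewrite hu YE cdf_ofE.
have G_atomless y : P (G @^-1` [set y]) = 0%E.
  by have := max_gap_atomless heps_ind k1k ltr01 eps_itv_le y.
have G_itv_gt0 a b : a < b -> (0 < P (G @^-1` `]a, b]))%E.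
  by move=> ab; have := max_gap_itv_gt0 heps_ind k1k eps_itv_gt0 ab.
split=> [A mA | t t01 w]; first by rewrite uE; exact: cdfr_comp_uniform.
rewrite hz hw hx0 (max_except_ebasis_ltE k1k) ?hsigma // -(hF t t01) YE cdf_ofE uE /=.
by rewrite (cdfr_ltE G_itv_gt0) mxE.
Qed.
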